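(* Let $G=\langle A\cup B\rangle$ be a CS group with abelian periodic rooted group $A$ such that either (i) $A$ has finite exponent, or (ii) $B$ has finite support. Then $G$ is periodic if and only if for every $b\in B$ the map $\lambda_b:A\to A$ is eventually trivial, i.e. for every $a\in A$ there is $n\in\mathbb N$ with $\lambda_b^n(a)=1_A$.
   Context: Let $X$ be a nonempty set (possibly infinite) with distinguished letter $0$, $\dot X=X\setminus\{0\}$. $X^*$ is the free monoid on $X$ viewed as a rooted tree; $\mathrm{Aut}(X^* )$ acts on the right; sections $g|_u$ are defined by $(u\star v).g=u.g\star v.(g|_u)$; elements of $\mathrm{Sym}(X)$ are identified with rooted automorphisms; $\mathrm{St}(1)$ is the first layer stabiliser. A constant spinal (CS) group is $G=\langle A\cup B\rangle$ with $A\le\mathrm{Sym}(X)$ transitive (rooted group) and $B\le\mathrm{St}(1)$ (directed group) such that $b|_0=b$ for all $b\in B$ and the elements $b|_x$ ($b\in B$, $x\in\dot X$) lie in $A$ and generate $A$. $B$ has finite support if each $b\in B$ has $b|_x=\mathrm{id}$ for all but finitely many $x$. For $a\in A$ let $\ell_a(0)$ be the length of the $\langle a\rangle$-orbit of $0$, and for $b\in B$ let $\lambda_b(a)=b|_{0.a}\,b|_{0.a^2}\cdots b|_{0.a^{\ell_a(0)-1}}$. A group is periodic if every element has finite order. *)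

From Stdlib Require Import ClassicalEpsilon.
From mathcomp Require Import all_boot.
Set Implicit Arguments. Unset Strict Implicit. Unset Printing Implicit Defensive.

Section TreeAut.
Variable X : eqType.

(* Maps of the rooted tree X^* (words = seq X); automorphisms act on the right. *)
Definition tfun := seq X -> seq X.

Definition tid : tfun := fun w => w.

Definition mul (g h : tfun) : tfun := fun w => h (g w).

Definition pow (g : tfun) (n : nat) : tfun := fun w => iter n g w.

Definition is_aut (g : tfun) : Prop :=
  (exists g' : tfun, cancel g g' /\ cancel g' g) /\
  (forall w, size (g w) = size w) /\
  (forall u v, take (size u) (g (u ++ v)) = g u).

(* section g|_u, defined by (u v).g = (u.g) (v.(g|_u)) *)
Definition section (g : tfun) (u : seq X) : tfun :=
  fun v => drop (size u) (g (u ++ v)).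

Definition act1 (g : tfun) (x : X) : X := head x (g [:: x]).

Definition rooted (g : tfun) : Prop :=
  exists s : X -> X, g [::] = [::] /\ forall x v, g (x :: v) = s x :: v.

Definition stab1 (g : tfun) : Prop := forall x, g [:: x] = [:: x].

Definition subgroup (H : tfun -> Prop) : Prop :=
  (forall g, H g -> is_aut g) /\ H tid /\
  (forall g h, H g -> H h -> H (mul g h)) /\
  (forall g, H g -> exists g', H g' /\ mul g g' = tid /\ mul g' g = tid).

Inductive gen (S : tfun -> Prop) : tfun -> Prop :=
| gen1 : gen S tid
| genM g h : S g -> gen S h -> gen S (mul g h)
| genV g g' h : S g -> cancel g g' -> cancel g' g -> gen S h -> gen S (mul g' h).

Definition transitive_on_letters (A : tfun -> Prop) : Prop :=
  forall x y : X, exists a, A a /\ act1 a x = y.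

Definition CS_group (x0 : X) (A B : tfun -> Prop) : Prop :=
  [/\ subgroup A, (forall a, A a -> rooted a), transitive_on_letters A,
      subgroup B & (forall b, B b -> stab1 b)] /\
  [/\
      (forall b, B b -> section b [:: x0] = b),
      (forall b x, B b -> x != x0 -> A (section b [:: x])) &
      (forall a, A a ->
         gen (fun g => exists b x, [/\ B b, x != x0 & g = section b [:: x]]) a)].

Definition abelian_set (A : tfun -> Prop) : Prop :=
  forall a a', A a -> A a' -> mul a a' = mul a' a.

Definition periodic_set (H : tfun -> Prop) : Prop :=
  forall g, H g -> exists n, 0 < n /\ pow g n = tid.

Definition finite_exponent (H : tfun -> Prop) : Prop :=
  exists n, 0 < n /\ forall g, H g -> pow g n = tid.

Definition finite_support (x0 : X) (B : tfun -> Prop) : Prop :=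
  forall b, B b -> exists s : seq X,
    forall x, x != x0 -> x \notin s -> section b [:: x] = tid.

(* l_a(0): length of the <a>-orbit of x0 = least k > 0 with x0.a^k = x0
   (0 if no such k; never happens for periodic a) *)
Definition orbit_len (x0 : X) (a : tfun) : nat :=
  match excluded_middle_informative
          (exists k, (0 < k) && (act1 (pow a k) x0 == x0)) with
  | left h => ex_minn h
  | right _ => 0
  end.

Definition prodl (fs : seq tfun) : tfun := foldr mul tid fs.

Definition lambda (x0 : X) (b : tfun) (a : tfun) : tfun :=
  prodl [seq section b [:: act1 (pow a j) x0] | j <- iota 1 (orbit_len x0 a).-1].

End TreeAut.
Arguments tid {X} _.

From Pilot Require Import Defs.
From Stdlib Require Import ClassicalEpsilon FunctionalExtensionality Lia.
From mathcomp Require Import all_boot zify.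
Set Implicit Arguments. Unset Strict Implicit. Unset Printing Implicit Defensive.

(* An element of G is a word w in A and B.  Since B fixes the first level, w
   moves a letter x only through its A-part a_w; if l is the length of the
   a_w-orbit of x then w^l fixes x, and its section there is again a word, the
   orbit word of w at x.  Each B-letter b of w contributes one letter for each
   point of the orbit: b itself at the (at most one) point where it passes
   through 0, and a section of b lying in A elsewhere.  So the number of
   B-letters never increases, and if it stays the same then the A-part of the
   orbit word is lambda_beta(a_w), beta being the product of the B-letters of w,
   while lambda_beta itself is unchanged because A is abelian.  Eventual
   triviality of lambda_beta therefore leads after finitely many steps either to
   fewer B-letters (induction) or to a word with trivial A-part, an element of B,
   which is periodic.  Hypothesis (i) or (ii) bounds the orders of the sections of
   w^l uniformly at all but finitely many letters, so w is periodic once all its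
   orbit words are.  Conversely the orbit word of b a at 0 is b lambda_b(a), whose
   order is the order of b a divided by l_a(0). *)

Definition all_in (U : Type) (P : U -> Prop) (s : seq U) := forall y, List.In y s -> P y.

Lemma all_in_cons U (P : U -> Prop) y s : all_in P (y :: s) <-> P y /\ all_in P s.
Proof.
split=> [H|[H1 H2] z [<-|Hz]] //; last exact: H2.
by split=> [|z Hz]; apply: H; [left|right].
Qed.

Lemma all_in_map U V (f : U -> V) (P : V -> Prop) s :
  all_in P (map f s) <-> all_in (fun y => P (f y)) s.
Proof.
elim: s => [|y s IH] /=; first by split=> _ z [].
by rewrite !all_in_cons IH.
Qed.

Lemma all_in_cat U (P : U -> Prop) s t : all_in P (s ++ t) <-> all_in P s /\ all_in P t.
Proof.
elim: s => [|y s IH] /=; first by split=> [H|[_ H]] //; split=> // z [].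
by rewrite !all_in_cons IH; tauto.
Qed.

Lemma all_in_flatten U (P : U -> Prop) ss : all_in P (flatten ss) <-> all_in (all_in P) ss.
Proof.
elim: ss => [|s ss IH] /=; first by split=> _ z [].
by rewrite all_in_cat all_in_cons IH.
Qed.

Lemma sub_all_in U (P Q : U -> Prop) s : (forall y, P y -> Q y) -> all_in P s -> all_in Q s.
Proof. by move=> PQ Ps y /Ps /PQ. Qed.

Lemma In_mem (T : eqType) (y : T) s : List.In y s <-> y \in s.
Proof.
elim: s => [|z s IH] //=; rewrite inE; split.
  by case=> [->|/IH ->]; rewrite ?eqxx ?orbT.
by case/orP=> [/eqP ->|/IH]; auto.
Qed.

Lemma In_iota i m n : List.In i (iota m n) <-> m <= i < m + n.
Proof. by rewrite In_mem mem_iota. Qed.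

Lemma eq_in_map_all U V (f g : U -> V) s : all_in (fun y => f y = g y) s -> map f s = map g s.
Proof. by elim: s => //= y s IH /all_in_cons [-> /IH ->]. Qed.

Section CommutingProducts.
Variables (T : Type) (op : T -> T -> T) (e : T) (D : T -> Prop).
Hypothesis opA : forall x y z, op x (op y z) = op (op x y) z.
Hypothesis op1x : forall x, op e x = x.
Hypothesis opC : forall x y, D x -> D y -> op x y = op y x.
Hypothesis De : D e.
Hypothesis D_op : forall x y, D x -> D y -> D (op x y).

Lemma foldr_op_closed s : all_in D s -> D (foldr op e s).
Proof. by elim: s => [|y s IH] //= /all_in_cons [Dy /IH]; apply: D_op. Qed.

Lemma foldr_op_cat s t : foldr op e (s ++ t) = op (foldr op e s) (foldr op e t).
Proof. by elim: s => [|y s IH] /=; rewrite ?op1x // IH opA. Qed.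

Lemma foldr_op_flatten ss : foldr op e (flatten ss) = foldr op e (map (foldr op e) ss).
Proof. by elim: ss => [|s ss IH] //=; rewrite foldr_op_cat IH. Qed.

Lemma foldr_op_split U (f g : U -> T) (s : seq U) :
  all_in (fun y => D (f y) /\ D (g y)) s ->
  foldr op e [seq op (f y) (g y) | y <- s] =
  op (foldr op e (map f s)) (foldr op e (map g s)).
Proof.
elim: s => [|y s IH] /=; first by rewrite op1x.
move=> /all_in_cons [[Df Dg] Ds]; rewrite IH //.
have /foldr_op_closed Dgs : all_in D (map g s) by apply/all_in_map=> z /Ds [].
have /foldr_op_closed Dfs : all_in D (map f s) by apply/all_in_map=> z /Ds [].
by rewrite -!opA; congr (op _ _); rewrite !opA (opC Dg Dfs).
Qed.

Lemma foldr_op_exchange I J (F : I -> J -> T) (s : seq I) (t : seq J) :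
  all_in (fun i => all_in (fun j => D (F i j)) t) s ->
  foldr op e [seq foldr op e [seq F i j | j <- t] | i <- s] =
  foldr op e [seq foldr op e [seq F i j | i <- s] | j <- t].
Proof.
elim: s => [|i s IH] /=.
  by move=> _; elim: t => [|j t IHt] //=; rewrite op1x -IHt.
move=> /all_in_cons [Fi Fs]; rewrite IH // foldr_op_split // => j Hj.
by split; [exact: Fi | apply/foldr_op_closed/all_in_map => i' /Fs; apply].
Qed.

End CommutingProducts.

Lemma sumn_exchange I J (F : I -> J -> nat) (s : seq I) (t : seq J) :
  sumn [seq sumn [seq F i j | j <- t] | i <- s] =
  sumn [seq sumn [seq F i j | i <- s] | j <- t].
Proof.
apply: (@foldr_op_exchange _ addn 0 (fun _ => True) addnA add0n
          (fun x y _ _ => addnC x y) Logic.I (fun _ _ _ _ => Logic.I)).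
by move=> i _ j _.
Qed.

Lemma sumn_le_size_all1 U (f : U -> nat) s : all_in (fun y => f y <= 1) s ->
  sumn (map f s) <= size s /\ (sumn (map f s) = size s -> all_in (fun y => f y = 1) s).
Proof.
elim: s => [|y s IH] /=; first by split=> // _ ? [].
move/all_in_cons=> [Hy /IH [H1 H2]]; split; first by rewrite -add1n leq_add.
by move=> E; apply/all_in_cons; split; [|apply: H2]; lia.
Qed.

Lemma iter_inj (T : Type) (f : T -> T) k : injective f -> injective (iter k f).
Proof. by move=> Hf; elim: k => //= k IH y z /Hf /IH. Qed.

Lemma commute_iter (T : Type) (f g : T -> T) k y : (forall z, f (g z) = g (f z)) ->
  iter k f (g y) = g (iter k f y).
Proof. by move=> H; elim: k => //= k ->. Qed.

Definition periodic (X : eqType) (g : tfun X) := exists n, 0 < n /\ pow g n = tid.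

Section Powers.
Variable X : eqType.
Implicit Types f g h : tfun X.

Lemma tfun_mulA f g h : Defs.mul f (Defs.mul g h) = Defs.mul (Defs.mul f g) h.
Proof. by []. Qed.

Lemma tfun_mul1 g : Defs.mul tid g = g.
Proof. by []. Qed.

Lemma pow_tid m : pow (@tid X) m = tid.
Proof. by apply: functional_extensionality => u; apply: iter_fix. Qed.

Lemma pow_dvd_tid g N M : pow g N = tid -> N %| M -> pow g M = tid.
Proof.
move=> gN /dvdnP [k ->]; apply: functional_extensionality => u.
rewrite /pow iterM; apply: iter_fix.
by have := congr1 (fun f => f u) gN.
Qed.

Lemma pow_mul_commute g h m : Defs.mul g h = Defs.mul h g ->
  pow (Defs.mul g h) m = Defs.mul (pow g m) (pow h m).
Proof.
move=> gh; have gh' u : h (g u) = g (h u) by have := congr1 (fun f => f u) gh.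
apply: functional_extensionality => u; rewrite /pow /Defs.mul.
by elim: m => //= m ->; rewrite (commute_iter _ _ gh').
Qed.

Lemma common_period (I : eqType) (f : I -> tfun X) (L : seq I) :
  (forall i, i \in L -> periodic (f i)) ->
  exists2 M, 0 < M & forall i, i \in L -> pow (f i) M = tid.
Proof.
elim: L => [|j L IH] H; first by exists 1.
have [M M_gt0 HM] := IH (fun i Li => H i (mem_behead (s := j :: L) Li)).
have [N [N_gt0 HN]] := H j (mem_head _ _).
exists (N * M) => [|i]; first by rewrite muln_gt0 N_gt0.
rewrite inE => /predU1P [->|/HM fM].
  by apply: pow_dvd_tid HN _; exact: dvdn_mulr.
by apply: pow_dvd_tid fM _; exact: dvdn_mull.
Qed.

End Powers.

Lemma subgroup_inv_mem (X : eqType) (H : tfun X -> Prop) h h' :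
  subgroup H -> H h -> cancel h h' -> cancel h' h -> H h'.
Proof.
move=> [_ [_ [_ Hinv]]] /Hinv [h'' [Hh'' [hh'' _]]] hh' h'h.
suff -> : h' = h'' by [].
apply: functional_extensionality => v.
by rewrite -{2}(h'h v); have := congr1 (fun f => f (h' v)) hh''.
Qed.

Lemma finite_union (X : eqType) I (P : I -> X -> Prop) (s : seq I) :
  (forall i, List.In i s -> exists F : seq X, forall y, P i y -> y \in F) ->
  exists F : seq X, forall i y, List.In i s -> P i y -> y \in F.
Proof.
elim: s => [|i s IH] H; first by exists [::].
have [F1 HF1] := H i (or_introl erefl).
have [F2 HF2] := IH (fun j sj => H j (or_intror sj)).
exists (F1 ++ F2) => j y [<-|sj] Py; rewrite mem_cat; first by rewrite HF1.
by rewrite (HF2 j) ?orbT.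
Qed.

Section ConstantSpinal.
Variables (X : eqType) (x0 : X) (A B : tfun X -> Prop).
Hypothesis A_group : subgroup A.
Hypothesis A_rooted : forall a, A a -> rooted a.
Hypothesis B_group : subgroup B.
Hypothesis B_stab1 : forall b, B b -> stab1 b.
Hypothesis B_sec0 : forall b, B b -> section b [:: x0] = b.
Hypothesis B_secA : forall b x, B b -> x != x0 -> A (section b [:: x]).
Hypothesis A_abelian : abelian_set A.
Hypothesis A_periodic : periodic_set A.

Local Notation sec g x := (section g [:: x]).

Lemma A_id : A tid. Proof. by case: A_group => _ []. Qed.
Lemma B_id : B tid. Proof. by case: B_group => _ []. Qed.

Lemma A_mul a c : A a -> A c -> A (Defs.mul a c).
Proof. by case: A_group => _ [_ [+ _]]; apply. Qed.

Lemma B_mul b c : B b -> B c -> B (Defs.mul b c).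
Proof. by case: B_group => _ [_ [+ _]]; apply. Qed.

Lemma A_cons a x v : A a -> a (x :: v) = act1 a x :: v.
Proof. by move/A_rooted=> [s [_ H]]; rewrite /act1 !H. Qed.

Lemma A_nil a : A a -> a [::] = [::].
Proof. by move/A_rooted=> [s []]. Qed.

Lemma B_cons b x v : B b -> b (x :: v) = x :: sec b x v.
Proof.
move=> Bb; case: B_group => /(_ b Bb) [_ [_ prefix_b]] _.
have := prefix_b [:: x] v; rewrite (B_stab1 Bb) /section /=.
by case: (b (x :: v)) => [|y t] //= [->]; rewrite drop0.
Qed.

Lemma B_nil b : B b -> b [::] = [::].
Proof. by move=> Bb; case: B_group => /(_ b Bb) [_ [/(_ [::]) /size0nil]]. Qed.

Lemma act1M a c y : A a -> A c -> act1 (Defs.mul a c) y = act1 c (act1 a y).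
Proof. by move=> Aa Ac; rewrite /act1 /Defs.mul !A_cons. Qed.

Lemma act1_inj a : A a -> injective (act1 a).
Proof.
case: A_group => _ [_ [_ Ainv]] /[dup] Aa /Ainv [a' [Aa' [aa' _]]].
have K y : act1 a' (act1 a y) = y by rewrite -act1M // aa'.
exact: can_inj K.
Qed.

Lemma act1C a c y : A a -> A c -> act1 a (act1 c y) = act1 c (act1 a y).
Proof. by move=> Aa Ac; rewrite -!act1M // A_abelian. Qed.

Lemma act1_pow a k y : A a -> act1 (pow a k) y = iter k (act1 a) y.
Proof.
move=> Aa; rewrite /act1; suff -> : pow a k [:: y] = [:: iter k (act1 a) y] by [].
by elim: k => //= k IH; rewrite /pow /= in IH *; rewrite IH A_cons.
Qed.

Definition Amap (h : X -> X) := exists2 a, A a & forall y, h y = act1 a y.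

Lemma Amap_id : Amap id. Proof. by exists tid; first exact: A_id. Qed.

Lemma Amap_comp h h' : Amap h -> Amap h' -> Amap (h \o h').
Proof.
move=> [a Aa ha] [c Ac hc]; exists (Defs.mul c a); first exact: A_mul.
by move=> y; rewrite act1M //= ha hc.
Qed.

Lemma Amap_inj h : Amap h -> injective h.
Proof. by move=> [a Aa ha] y z; rewrite !ha; apply: act1_inj. Qed.

Lemma Amap_commute h h' y : Amap h -> Amap h' -> h (h' y) = h' (h y).
Proof. by move=> [a Aa ha] [c Ac hc]; rewrite !ha !hc act1C. Qed.

Lemma Amap_iter h i : Amap h -> Amap (iter i h).
Proof. by move=> hA; elim: i => [|i IH]; [exact: Amap_id | exact: Amap_comp]. Qed.

Lemma Amap_preimage h (L : seq X) : Amap h -> exists F : seq X, forall y, h y \in L -> y \in F.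
Proof.
case: A_group => _ [_ [_ Ainv]] [a /[dup] Aa /Ainv [a' [Aa' [aa' _]]] ha].
exists (map (act1 a') L) => y hyL; apply/mapP; exists (h y) => //.
by rewrite ha -act1M // aa'.
Qed.

Lemma orbit_lenP a y : A a ->
  [/\ 0 < orbit_len y a, iter (orbit_len y a) (act1 a) y = y &
      forall m, 0 < m -> iter m (act1 a) y = y -> orbit_len y a <= m].
Proof.
move=> Aa; rewrite /orbit_len; case: excluded_middle_informative => [h|no_period].
  case: ex_minnP => m /andP [m_gt0 /eqP am] m_min; rewrite -act1_pow //.
  by split=> // k k_gt0 ak; apply: m_min; rewrite k_gt0 act1_pow // ak /=.
have [n [n_gt0 an]] := A_periodic Aa.
by case: no_period; exists n; rewrite n_gt0 an /act1 eqxx.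
Qed.

Section Orbit.
Variables (a : tfun X) (y : X).
Hypothesis Aa : A a.
Local Notation s := (act1 a).
Local Notation l := (orbit_len y a).

Lemma iter_orbit_len_dvdP m : iter m s y = y <-> l %| m.
Proof.
have [l_gt0 sl l_min] := orbit_lenP y Aa.
have sql q : iter (q * l) s y = y by rewrite iterM; apply: iter_fix.
split=> [sm|/dvdnP [q ->] //].
have := sm; rewrite {1}(divn_eq m l) addnC iterD sql /dvdn.
case: posnP => [-> //|r_gt0 /(l_min _ r_gt0)].
by rewrite leqNgt ltn_pmod.
Qed.

Lemma iter_orbit_inj i j : i < l -> j < l -> iter i s y = iter j s y -> i = j.
Proof.
wlog ij : i j / i <= j.
  move=> W il jl E; case: (leqP i j) => [ij | /ltnW ji]; first exact: W.
  by symmetry; apply: W.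
move=> il jl; rewrite -(subnK ij) iterD => E.
have : iter i s (iter (j - i) s y) = iter i s y by rewrite -iterD addnC iterD -E.
move=> /(iter_inj (act1_inj Aa)) /iter_orbit_len_dvdP /eqP.
by rewrite modn_small => [/eqP|]; lia.
Qed.

Lemma orbit_len_dvd n : pow a n = tid -> l %| n.
Proof. by move=> an; apply/iter_orbit_len_dvdP; rewrite -act1_pow // an. Qed.

Lemma orbit_len_conj (h : X -> X) : injective h -> (forall z, h (s z) = s (h z)) ->
  orbit_len (h y) a = l.
Proof.
move=> h_inj hs; have hsm m : iter m s (h y) = h (iter m s y).
  by apply: commute_iter => z; rewrite hs.
have [l_gt0 sl l_min] := orbit_lenP y Aa; have [l'_gt0 sl' l'_min] := orbit_lenP (h y) Aa.
apply/anti_leq/andP; split; first by apply: l'_min; rewrite ?hsm ?sl.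
by apply: l_min => //; apply: h_inj; rewrite -hsm.
Qed.

Lemma orbit_len_iter m : orbit_len (iter m s y) a = l.
Proof. by apply: orbit_len_conj => [|z]; [apply/iter_inj/act1_inj | rewrite -iterSr]. Qed.

End Orbit.

Lemma prodl_cat (s t : seq (tfun X)) : prodl (s ++ t) = Defs.mul (prodl s) (prodl t).
Proof. exact: (@foldr_op_cat _ (@Defs.mul X) tid (@tfun_mulA X) (@tfun_mul1 X)). Qed.

Lemma prodl_flatten (ss : seq (seq (tfun X))) : prodl (flatten ss) = prodl (map (@prodl X) ss).
Proof. exact: (@foldr_op_flatten _ (@Defs.mul X) tid (@tfun_mulA X) (@tfun_mul1 X)). Qed.

Lemma prodl_A s : all_in A s -> A (prodl s).
Proof. exact: (@foldr_op_closed _ (@Defs.mul X) tid A A_id A_mul). Qed.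

Lemma prodl_B s : all_in B s -> B (prodl s).
Proof. exact: (@foldr_op_closed _ (@Defs.mul X) tid B B_id B_mul). Qed.

Lemma prodl_exchange I J (F : I -> J -> tfun X) (s : seq I) (t : seq J) :
  all_in (fun i => all_in (fun j => A (F i j)) t) s ->
  prodl [seq prodl [seq F i j | j <- t] | i <- s] =
  prodl [seq prodl [seq F i j | i <- s] | j <- t].
Proof.
exact: (@foldr_op_exchange _ _ tid A (@tfun_mulA X) (@tfun_mul1 X) A_abelian A_id A_mul).
Qed.

Lemma prodl_mul U (f g : U -> tfun X) (s : seq U) :
  all_in (fun y => A (f y) /\ A (g y)) s ->
  prodl [seq Defs.mul (f y) (g y) | y <- s] =
  Defs.mul (prodl (map f s)) (prodl (map g s)).
Proof.
exact: (@foldr_op_split _ _ tid A (@tfun_mulA X) (@tfun_mul1 X) A_abelian A_id A_mul).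
Qed.

Lemma prodl_if_pow (P : pred nat) (v : tfun X) s :
  prodl [seq (if P i then v else tid) | i <- s] = pow v (count P s).
Proof.
elim: s => //= i s ->; case: (P i) => //=.
by apply: functional_extensionality => u; rewrite /pow /Defs.mul /= -iterSr.
Qed.

Lemma pow_prodl_tid m s : all_in (fun g => A g /\ pow g m = tid) s -> pow (prodl s) m = tid.
Proof.
elim: s => [_|g s IH /all_in_cons [[Ag gm] /[dup] Vs /IH sm]] /=; first exact: pow_tid.
rewrite pow_mul_commute ?gm ?sm //; apply: A_abelian Ag _.
by apply: prodl_A; apply: sub_all_in Vs => ? [].
Qed.

Lemma prodl_orbit_shift a (f : X -> tfun X) u i0 : A a -> (forall z, A (f z)) ->
  i0 < orbit_len u a -> iter i0 (act1 a) u = x0 ->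
  prodl [seq f (iter i (act1 a) u) | i <- iota 0 (orbit_len u a)] =
  prodl [seq f (iter i (act1 a) x0) | i <- iota 0 (orbit_len x0 a)].
Proof.
move=> Aa Af i0l ux0; have [_ ul _] := orbit_lenP u Aa.
rewrite -ux0 orbit_len_iter //; set l := orbit_len u a.
have split_at k : k <= l -> iota 0 l = iota 0 k ++ iota k (l - k).
  by move=> kl; rewrite -iotaD subnKC.
have iota_shift k n : iota k n = map (addn k) (iota 0 n) by rewrite -iotaDl addn0.
have i0l' : i0 <= l by exact: ltnW.
rewrite [in LHS](split_at i0) // [in RHS](split_at (l - i0)) ?leq_subr // subKn //.
rewrite !map_cat !prodl_cat [in LHS]A_abelian; try by apply/prodl_A/all_in_map.
rewrite (iota_shift i0) (iota_shift (l - i0)) -!map_comp.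
apply: (f_equal2 (@Defs.mul X)); congr prodl; apply: eq_map => i /=; first by rewrite addnC iterD.
by rewrite -iterD (_ : l - i0 + i + i0 = i + l) ?iterD ?ul //; lia.
Qed.

(* [lambda_b(a)] is the product of the sections of [b] over the whole orbit of
   [x0] with the term at [x0] itself omitted; [sec0] makes the omission uniform. *)
Definition sec0 b z := if z == x0 then tid else sec b z.

Lemma sec0_A b z : B b -> A (sec0 b z).
Proof. by move=> Bb; rewrite /sec0; case: eqP => [_|/eqP]; [exact: A_id | exact: B_secA]. Qed.

Lemma lambda_sec0 a b : A a ->
  lambda x0 b a = prodl [seq sec0 b (iter i (act1 a) x0) | i <- iota 0 (orbit_len x0 a)].
Proof.
move=> Aa; have [l_gt0 _ l_min] := orbit_lenP x0 Aa.
rewrite /lambda -(prednK l_gt0) /= {1}/sec0 eqxx; congr prodl.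
apply/eq_in_map => i; rewrite mem_iota => /andP [i_gt0 il].
rewrite /sec0 act1_pow //; case: eqP => // /(l_min _ i_gt0); lia.
Qed.

Lemma lambda_A b a : B b -> A a -> A (lambda x0 b a).
Proof.
by move=> Bb Aa; rewrite lambda_sec0 //; apply/prodl_A/all_in_map => i _; exact: sec0_A.
Qed.

Lemma sec_mulB b c z : B b -> B c -> sec (Defs.mul b c) z = Defs.mul (sec b z) (sec c z).
Proof.
move=> Bb Bc; apply: functional_extensionality => v.
by rewrite /section /Defs.mul /= B_cons //= drop0.
Qed.

Lemma lambda_mul b c a : B b -> B c -> A a ->
  lambda x0 (Defs.mul b c) a = Defs.mul (lambda x0 b a) (lambda x0 c a).
Proof.
move=> Bb Bc Aa; rewrite !lambda_sec0 // -prodl_mul => [|i _]; last by split; apply: sec0_A.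
by congr prodl; apply: eq_map => i; rewrite /sec0; case: eqP => // _; rewrite sec_mulB.
Qed.

Lemma lambda_tid a : A a -> lambda x0 tid a = tid.
Proof.
move=> Aa; rewrite lambda_sec0 //; elim: (iota 0 _) => //= i s ->.
rewrite /sec0; case: eqP => // _.
by apply: functional_extensionality => v; rewrite /section /Defs.mul /= drop0.
Qed.

Lemma lambda_prodl bs a : all_in B bs -> A a ->
  lambda x0 (prodl bs) a = prodl [seq lambda x0 b a | b <- bs].
Proof.
move=> Bbs Aa; elim: bs Bbs => [|b bs IH] /=; first by move=> _; exact: lambda_tid.
by move/all_in_cons=> [Bb Bbs]; rewrite lambda_mul ?IH //; exact: prodl_B.
Qed.

(* The letter [(true, b)] stands for [b] in [B], the letter [(false, a)] for [a] in [A]. *)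
Definition letter := (bool * tfun X)%type.
Definition valid_letter (l : letter) := if l.1 then B l.2 else A l.2.
Definition valid_word (w : seq letter) := all_in valid_letter w.
Definition eval (w : seq letter) : tfun X := prodl (map snd w).

Fixpoint act1w (w : seq letter) (x : X) : X :=
  if w is l :: w' then act1w w' (if l.1 then x else act1 l.2 x) else x.

(* The B-letters of [w], each paired with the action on the first level of the
   part of [w] before it. *)
Fixpoint Bletters (w : seq letter) : seq (tfun X * (X -> X)) :=
  if w is l :: w' then
    if l.1 then (l.2, id) :: Bletters w'
    else [seq (p.1, p.2 \o act1 l.2) | p <- Bletters w']
  else [::].

Definition sec_letter (p : tfun X * (X -> X)) (y : X) : letter :=
  (p.2 y == x0, sec p.1 (p.2 y)).

Definition section_word (w : seq letter) (y : X) := [seq sec_letter p y | p <- Bletters w].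

Fixpoint wpow n (w : seq letter) := if n is n'.+1 then w ++ wpow n' w else [::].

Definition Apart (w : seq letter) := prodl [seq (if l.1 then tid else l.2) | l <- w].
Definition Bpart (w : seq letter) := prodl [seq p.1 | p <- Bletters w].

Lemma valid_word_cons l w : valid_word (l :: w) <-> valid_letter l /\ valid_word w.
Proof. exact: all_in_cons. Qed.

Lemma valid_wpow n w : valid_word w -> valid_word (wpow n w).
Proof. by move=> Vw; elim: n => [|n IH] //= l; rewrite List.in_app_iff => -[/Vw|/IH]. Qed.

Lemma eval_nil w : valid_word w -> eval w [::] = [::].
Proof.
elim: w => //= -[[] g] w IH /valid_word_cons [Vg /IH]; rewrite /eval /= /Defs.mul.
  by have Bg : B g := Vg; rewrite (B_nil Bg).
by have Ag : A g := Vg; rewrite (A_nil Ag).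
Qed.

Lemma eval_cons w x v : valid_word w ->
  eval w (x :: v) = act1w w x :: eval (section_word w x) v.
Proof.
elim: w x v => //= -[[] g] w IH x v /valid_word_cons [Vg Vw]; rewrite /eval /= /Defs.mul.
  by have Bg : B g := Vg; rewrite (B_cons _ _ Bg) [LHS]IH.
have Ag : A g := Vg; rewrite (A_cons _ _ Ag) [LHS]IH //.
by congr (_ :: eval _ v); rewrite /section_word /= -map_comp.
Qed.

Lemma act1w_cat w1 w2 x : act1w (w1 ++ w2) x = act1w w2 (act1w w1 x).
Proof. by elim: w1 x => //= l w1 IH x; rewrite IH. Qed.

Lemma Bletters_cat w1 w2 :
  Bletters (w1 ++ w2) = Bletters w1 ++ [seq (p.1, p.2 \o act1w w1) | p <- Bletters w2].
Proof.
elim: w1 => [|[[] g] w1 IH] /=; first by elim: (Bletters w2) => //= -[b f] s <-.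
  by rewrite IH.
by rewrite IH map_cat -!map_comp.
Qed.

Lemma section_word_cat w1 w2 x :
  section_word (w1 ++ w2) x = section_word w1 x ++ section_word w2 (act1w w1 x).
Proof. by rewrite /section_word Bletters_cat map_cat -map_comp. Qed.

Lemma eval_cat w1 w2 : eval (w1 ++ w2) = Defs.mul (eval w1) (eval w2).
Proof. by rewrite /eval map_cat prodl_cat. Qed.

Lemma act1w_wpow n w x : act1w (wpow n w) x = iter n (act1w w) x.
Proof. by elim: n x => //= n IH x; rewrite act1w_cat IH -iterSr. Qed.

Lemma eval_wpow n w : eval (wpow n w) = pow (eval w) n.
Proof.
apply: functional_extensionality => u; rewrite /pow.
by elim: n u => //= n IH u; rewrite eval_cat /Defs.mul IH -iterSr.
Qed.

Lemma wpow_mul q n w : wpow (q * n) w = wpow q (wpow n w).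
Proof.
have wpowD m k : wpow (m + k) w = wpow m w ++ wpow k w by elim: m => //= m ->; rewrite catA.
by elim: q => //= q IH; rewrite mulSn wpowD IH.
Qed.

Lemma section_word_wpow_fix q w x : act1w w x = x ->
  section_word (wpow q w) x = wpow q (section_word w x).
Proof. by move=> wx; elim: q => //= q IH; rewrite section_word_cat wx IH. Qed.

Lemma section_word_wpow n w m x :
  section_word (wpow n w) (iter m (act1w w) x) =
  flatten [seq section_word w (iter i (act1w w) x) | i <- iota m n].
Proof. by elim: n m => //= n IH m; rewrite section_word_cat -iterS IH. Qed.

Lemma Bletters_valid w : valid_word w -> all_in (fun p => B p.1 /\ Amap p.2) (Bletters w).
Proof.
elim: w => [_ ? []|[[] g] w IH /valid_word_cons [/= Vg /IH Vb]] /=.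
  by apply/all_in_cons; split=> //; split=> //; exact: Amap_id.
apply/all_in_map; apply: sub_all_in Vb => p [Bp hp].
by split=> //; apply: Amap_comp hp _; exists g.
Qed.

Lemma valid_sec_letter p y : B p.1 -> valid_letter (sec_letter p y).
Proof.
by move=> Bp; rewrite /valid_letter /=; case: eqP => [->|/eqP]; [rewrite B_sec0 | exact: B_secA].
Qed.

Lemma valid_section_word w x : valid_word w -> valid_word (section_word w x).
Proof.
move/Bletters_valid=> Vb; apply/all_in_map; apply: sub_all_in Vb => p [Bp _].
exact: valid_sec_letter.
Qed.

Lemma Apart_A w : valid_word w -> A (Apart w).
Proof.
elim: w => [_|[[] g] w IH /valid_word_cons [/= Vg /IH Aw]].
- exact: A_id.
- exact: Aw.
- exact: A_mul.
Qed.

Lemma act1w_Apart w y : valid_word w -> act1w w y = act1 (Apart w) y.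
Proof.
elim: w y => [|[[] g] w IH] y // /valid_word_cons [/= Vg Vw]; first exact: IH.
by rewrite IH // /Apart /= act1M //; exact: Apart_A.
Qed.

Lemma iter_act1w w i y : valid_word w -> iter i (act1w w) y = iter i (act1 (Apart w)) y.
Proof. by move=> Vw; apply: eq_iter => z; exact: act1w_Apart. Qed.

Lemma size_Bletters w : size (Bletters w) = count fst w.
Proof. by elim: w => [|[[] g] w IH] //=; rewrite ?size_map IH. Qed.

Lemma Bpart_B w : valid_word w -> B (Bpart w).
Proof. by move/Bletters_valid=> Vb; apply/prodl_B/all_in_map; apply: sub_all_in Vb => p []. Qed.

Lemma prodl_Bletters (f : tfun X -> tfun X) w :
  prodl [seq f p.1 | p <- Bletters w] = prodl [seq (if l.1 then f l.2 else tid) | l <- w].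
Proof. by elim: w => [|[[] g] w IH] //=; rewrite -?map_comp IH. Qed.

Lemma lambda_Bpart w c : valid_word w -> A c ->
  lambda x0 (Bpart w) c = prodl [seq lambda x0 p.1 c | p <- Bletters w].
Proof.
move=> /Bletters_valid Vb Ac; rewrite lambda_prodl // -?map_comp //.
by apply/all_in_map; apply: sub_all_in Vb => p [].
Qed.

Section OrbitWord.
Variables (w : seq letter) (x : X).
Hypothesis Vw : valid_word w.
Local Notation a := (Apart w).
Local Notation s := (act1 (Apart w)).
Local Notation l := (orbit_len x (Apart w)).

Let Aa : A a := Apart_A Vw.

Definition orbit_word := section_word (wpow l w) x.

Lemma orbit_wordE :
  orbit_word = flatten [seq [seq sec_letter p (iter i s x) | p <- Bletters w] | i <- iota 0 l].
Proof.
rewrite /orbit_word -[x in section_word _ x]/(iter 0 (act1w w) x) section_word_wpow.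
by congr flatten; apply: eq_map => i; rewrite /section_word iter_act1w.
Qed.

Lemma valid_orbit_word : valid_word orbit_word.
Proof. exact/valid_section_word/valid_wpow. Qed.

Lemma all_in_orbit_word (P : letter -> Prop) :
  (forall i p, i < l -> List.In p (Bletters w) -> P (sec_letter p (iter i s x))) ->
  all_in P orbit_word.
Proof.
move=> H; rewrite orbit_wordE; apply/all_in_flatten/all_in_map => i /In_iota /andP [_ il].
by apply/all_in_map => p; exact: H.
Qed.

Lemma eval_wpow_orbit q v : eval (wpow (q * l) w) (x :: v) = x :: iter q (eval orbit_word) v.
Proof.
rewrite eval_cons; last exact: valid_wpow.
rewrite act1w_wpow iter_act1w //.
have -> : iter (q * l) s x = x by apply/(iter_orbit_len_dvdP _ Aa); exact: dvdn_mull.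
have wlx : act1w (wpow l w) x = x by rewrite act1w_wpow iter_act1w //; case: (orbit_lenP x Aa).
by rewrite wpow_mul section_word_wpow_fix // eval_wpow.
Qed.

Lemma orbit_len_dvd_period N : pow (eval w) N = tid -> l %| N.
Proof.
move=> wN; apply/(iter_orbit_len_dvdP _ Aa); rewrite -iter_act1w // -act1w_wpow.
have := congr1 (fun f => f [:: x]) wN; rewrite -eval_wpow eval_cons; last exact: valid_wpow.
by case.
Qed.

Lemma orbit_word_period N : pow (eval w) N = tid -> pow (eval orbit_word) (N %/ l) = tid.
Proof.
move=> /[dup] wN /orbit_len_dvd_period lN; apply: functional_extensionality => v.
have := congr1 (fun f => f (x :: v)) wN.
by rewrite -eval_wpow -{1}(divnK lN) eval_wpow_orbit => -[].
Qed.

Definition root_visits (p : tfun X * (X -> X)) :=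
  count (fun i => p.2 (iter i s x) == x0) (iota 0 l).

Definition all_visit_root := forall p, List.In p (Bletters w) ->
  exists2 i, i < l & p.2 (iter i s x) = x0.

Lemma root_hits_eq1 p i0 : List.In p (Bletters w) -> i0 < l -> p.2 (iter i0 s x) = x0 ->
  root_visits p = 1.
Proof.
move=> /(Bletters_valid Vw) [_ /Amap_inj p_inj] i0l pi0.
rewrite /root_visits (@eq_in_count _ _ (pred1 i0)) ?count_uniq_mem ?iota_uniq ?mem_iota ?i0l //.
move=> i; rewrite mem_iota add0n => /andP [_ il] /=; apply/eqP/eqP => [|-> //].
by rewrite -pi0 => /p_inj /(iter_orbit_inj Aa il i0l).
Qed.

Lemma root_hits_le1 p : List.In p (Bletters w) -> root_visits p <= 1.
Proof.
move=> Hp; case: (boolP (has (fun i => p.2 (iter i s x) == x0) (iota 0 l))).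
  by case/hasP => i; rewrite mem_iota => /andP [_ il] /eqP /(root_hits_eq1 Hp il) ->.
by rewrite has_count -leqNgt leqn0 /root_visits => /eqP ->.
Qed.

Lemma count_orbit_word : count fst orbit_word = sumn [seq root_visits p | p <- Bletters w].
Proof.
rewrite orbit_wordE count_flatten -map_comp.
rewrite (eq_map (g := fun i => sumn [seq nat_of_bool (p.2 (iter i s x) == x0) | p <- Bletters w])).
  by rewrite sumn_exchange; congr sumn; apply: eq_map => p; rewrite sumn_count.
by move=> i /=; rewrite count_map sumn_count.
Qed.

Lemma count_orbit_word_le : count fst orbit_word <= count fst w.
Proof.
rewrite count_orbit_word -size_Bletters.
exact: proj1 (sumn_le_size_all1 root_hits_le1).
Qed.

Lemma visit_root_count : count fst orbit_word = count fst w -> all_visit_root.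
Proof.
rewrite count_orbit_word -size_Bletters => /(proj2 (sumn_le_size_all1 root_hits_le1)) visits p Hp.
have : 0 < root_visits p by rewrite (visits p Hp).
by rewrite -has_count => /hasP [i]; rewrite mem_iota => /andP [_ il] /eqP; exists i.
Qed.

Lemma Apart_orbit_word : all_visit_root -> Apart orbit_word = lambda x0 (Bpart w) a.
Proof.
move=> visits; have Vb := Bletters_valid Vw.
rewrite /Apart orbit_wordE map_flatten prodl_flatten lambda_Bpart //.
transitivity
  (prodl [seq prodl [seq sec0 p.1 (p.2 (iter i s x)) | p <- Bletters w] | i <- iota 0 l]).
  by rewrite -!map_comp; congr prodl; apply: eq_map => i /=; rewrite -map_comp.
rewrite prodl_exchange => [|i _]; last by apply: sub_all_in Vb => p [Bp _]; exact: sec0_A.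
congr prodl; apply: eq_in_map_all => p Hp; have [Bp hp] := Vb p Hp.
have [i0 i0l hi0] := visits p Hp.
have sA : Amap s by exists a.
have hsi i : p.2 (iter i s x) = iter i s (p.2 x).
  by rewrite commute_iter // => z; exact: Amap_commute.
have lp : orbit_len (p.2 x) a = l.
  by apply: orbit_len_conj => [||z]; [exact: Aa | exact: Amap_inj | exact: Amap_commute].
rewrite lambda_sec0 // -(prodl_orbit_shift (u := p.2 x) (i0 := i0)) ?lp -?hsi //.
  by congr prodl; apply: eq_map => i; rewrite hsi.
by move=> z; exact: sec0_A.
Qed.

Lemma lambda_Bpart_orbit_word c : all_visit_root -> A c ->
  lambda x0 (Bpart orbit_word) c = lambda x0 (Bpart w) c.
Proof.
move=> visits Ac; have Vb := Bletters_valid Vw.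
have -> : lambda x0 (Bpart orbit_word) c =
          prodl [seq (if l.1 then lambda x0 l.2 c else tid) | l <- orbit_word].
  rewrite (lambda_Bpart valid_orbit_word Ac).
  exact: (prodl_Bletters (fun b => lambda x0 b c)).
rewrite (lambda_Bpart Vw Ac) orbit_wordE map_flatten prodl_flatten.
pose F i (p : tfun X * (X -> X)) :=
  if p.2 (iter i s x) == x0 then lambda x0 (sec p.1 (p.2 (iter i s x))) c else tid.
transitivity (prodl [seq prodl [seq F i p | p <- Bletters w] | i <- iota 0 l]).
  by rewrite -!map_comp; congr prodl; apply: eq_map => i /=; rewrite -map_comp.
rewrite prodl_exchange => [|i _]; last first.
  apply: sub_all_in Vb => p [Bp _]; rewrite /F.
  by case: eqP => [->|_]; [rewrite B_sec0 //; exact: lambda_A | exact: A_id].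
congr prodl; apply: eq_in_map_all => p Hp; have [Bp _] := Vb p Hp.
have [i0 i0l hi0] := visits p Hp.
rewrite (eq_map (g := fun i => if p.2 (iter i s x) == x0 then lambda x0 p.1 c else tid)).
  by rewrite prodl_if_pow -/(root_visits p) (root_hits_eq1 Hp i0l hi0).
by move=> i; rewrite /F; case: eqP => [->|] //; rewrite B_sec0.
Qed.

Lemma orbit_word_B : a = tid -> all_visit_root -> all_in (fun l => B l.2) orbit_word.
Proof.
move=> a1 visits; apply: all_in_orbit_word => i p il Hp.
have [Bp _] := Bletters_valid Vw Hp; have [i0 _ hi0] := visits p Hp.
have s1 y k : iter k s y = y by rewrite a1; apply: iter_fix.
by rewrite !s1 in hi0 *; rewrite /= hi0 B_sec0.
Qed.

End OrbitWord.

Definition uniform_section_exponent e (T : tfun X -> seq X) :=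
  forall b, B b -> forall z, z \notin T b -> z != x0 /\ pow (sec b z) e = tid.

Lemma exists_uniform_section_exponent : finite_exponent A \/ finite_support x0 B ->
  exists e T, 0 < e /\ uniform_section_exponent e T.
Proof.
case=> [[n [n_gt0 An]]|fin_supp].
  exists n, (fun _ => [:: x0]); split=> // b Bb z; rewrite inE => z0.
  by split=> //; apply/An/B_secA.
pose support b (s : seq X) := forall x, x != x0 -> x \notin s -> sec b x = tid.
exists 1, (fun b => x0 :: epsilon (inhabits [::]) (support b)); split=> // b Bb z.
rewrite inE negb_or => /andP [z0 zs]; split=> //.
by rewrite (epsilon_spec (inhabits [::]) (support b) (fin_supp b Bb)) // pow_tid.
Qed.

Lemma orbits_avoid_cofinitely w n (T : tfun X -> seq X) : valid_word w ->
  exists F : seq X, forall y, y \notin F -> forall i p, i < n -> List.In p (Bletters w) ->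
    p.2 (iter i (act1 (Apart w)) y) \notin T p.1.
Proof.
move=> Vw; have sA : Amap (act1 (Apart w)) by exists (Apart w); first exact: Apart_A.
have [F HF] : exists F : seq X, forall i y, List.In i (iota 0 n) ->
    (exists2 p, List.In p (Bletters w) & p.2 (iter i (act1 (Apart w)) y) \in T p.1) -> y \in F.
  apply: finite_union => i _.
  have [F HF] : exists F : seq X, forall p y, List.In p (Bletters w) ->
      p.2 (iter i (act1 (Apart w)) y) \in T p.1 -> y \in F.
    apply: finite_union => p /(Bletters_valid Vw) [_ hp].
    exact: Amap_preimage (Amap_comp hp (Amap_iter i sA)).
  by exists F => y [p]; exact: HF.
exists F => y yF i p il Hp; apply: contra yF => pT.
by apply: (HF i); [apply/In_iota | exists p].
Qed.

Section UniformExponent.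
Variables (e : nat) (T : tfun X -> seq X).
Hypothesis e_gt0 : 0 < e.
Hypothesis eT : uniform_section_exponent e T.

Lemma B_periodic b : B b -> periodic b.
Proof.
move=> Bb; have [M M_gt0 HM] : exists2 M, 0 < M & forall z, z \in T b -> pow (sec0 b z) M = tid.
  by apply: common_period => z _; apply: A_periodic; exact: sec0_A.
exists (M * e); split; first by rewrite muln_gt0 M_gt0.
have sec_period z : z != x0 -> pow (sec b z) (M * e) = tid.
  move=> z0; case: (boolP (z \in T b)) => [/HM | /(eT Bb) [_]].
    by rewrite /sec0 (negbTE z0) => /pow_dvd_tid; apply; exact: dvdn_mulr.
  by move/pow_dvd_tid; apply; exact: dvdn_mull.
apply: functional_extensionality; elim=> [|z v IH]; first by apply: iter_fix; exact: B_nil.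
rewrite /pow in IH *.
have -> : iter (M * e) b (z :: v) = z :: iter (M * e) (sec b z) v.
  by elim: (M * e) => //= k ->; rewrite B_cons.
case: (eqVneq z x0) => [->|/sec_period bz]; first by rewrite B_sec0 // IH.
by have := congr1 (fun f => f v) bz; rewrite /pow => ->.
Qed.

Lemma periodic_Bword w : all_in (fun l => B l.2) w -> periodic (eval w).
Proof. by move=> Bw; apply: B_periodic; apply/prodl_B/all_in_map. Qed.

Lemma periodic_of_orbit_words w : valid_word w ->
  (forall x, periodic (eval (orbit_word w x))) -> periodic (eval w).
Proof.
move=> Vw orbit_periodic; have Aw := Apart_A Vw; set a := Apart w in Aw *.
have [n [n_gt0 an]] := A_periodic Aw.
have [F avoid] := orbits_avoid_cofinitely n T Vw.
have [M M_gt0 HM] := common_period (fun x (_ : x \in F) => orbit_periodic x).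
exists (n * (M * e)); split; first by rewrite !muln_gt0 n_gt0 M_gt0.
apply: functional_extensionality => -[|x v].
  by rewrite -eval_wpow eval_nil //; exact: valid_wpow.
have ln : orbit_len x a %| n := orbit_len_dvd _ Aw an.
rewrite -eval_wpow -{1}(divnK ln) mulnAC eval_wpow_orbit //=; congr (_ :: _).
suff : pow (eval (orbit_word w x)) (n %/ orbit_len x a * (M * e)) = tid.
  by move/(congr1 (fun f => f v)).
case: (boolP (x \in F)) => [/HM xM | /avoid xF].
  by apply: pow_dvd_tid xM _; rewrite dvdn_mull // dvdn_mulr.
apply: pow_dvd_tid (dvdn_mull _ (dvdn_mull _ (dvdnn e))).
apply/pow_prodl_tid/all_in_map; apply: all_in_orbit_word => // i p il Hp.
have [Bp _] := Bletters_valid Vw Hp.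
have /(eT Bp) [z0 pe] := xF i p (leq_trans il (dvdn_leq n_gt0 ln)) Hp.
by split=> //; exact: B_secA.
Qed.

(* [f] agrees on A with lambda_beta, beta the product of the B-letters of [w]; an
   orbit word keeping all B-letters has the same [f] and A-part [f (Apart w)]. *)
Lemma periodic_by_lambda (f : tfun X -> tfun X) n w : valid_word w ->
  (forall u, valid_word u -> count fst u < count fst w -> periodic (eval u)) ->
  (forall c, A c -> lambda x0 (Bpart w) c = f c) -> iter n f (Apart w) = tid ->
  periodic (eval w).
Proof.
elim: n w => [|n IHn] w Vw IHcount lambda_f fn; apply: periodic_of_orbit_words => // x.
all: have Vx : valid_word (orbit_word w x) := valid_orbit_word Vw.
all: case: (ltnP (count fst (orbit_word w x)) (count fst w)) => [/(IHcount _ Vx) //|le].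
all: have eq_count : count fst (orbit_word w x) = count fst w.
all: try by apply/eqP; rewrite eqn_leq le count_orbit_word_le.
all: have visits := visit_root_count Vw eq_count.
  exact/periodic_Bword/(orbit_word_B Vw fn visits).
apply: (IHn _ Vx) => [u Vu|c Ac|].
- by rewrite eq_count; exact: IHcount.
- by rewrite lambda_Bpart_orbit_word // lambda_f.
- by rewrite Apart_orbit_word // lambda_f; [rewrite -fn iterSr | exact: Apart_A].
Qed.

End UniformExponent.

Lemma periodic_valid_word e T w : 0 < e -> uniform_section_exponent e T ->
  (forall b, B b -> forall a, A a -> exists n, iter n (lambda x0 b) a = tid) ->
  valid_word w -> periodic (eval w).
Proof.
move=> e_gt0 eT lambda_trivial; have [k] : exists k, count fst w = k by eexists.
elim/ltn_ind: k w => k IHk w ek Vw.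
have [n fn] := lambda_trivial _ (Bpart_B Vw) _ (Apart_A Vw).
apply: (periodic_by_lambda e_gt0 eT (f := lambda x0 (Bpart w)) (n := n)) => // u Vu.
by rewrite ek => /IHk; apply.
Qed.

Lemma valid_word_pair b c : B b -> A c -> valid_word [:: (true, b); (false, c)].
Proof. by move=> Bb Ac l [<-|[<-|[]]]. Qed.

Lemma eval_orbit_word_pair b c : B b -> A c ->
  eval (orbit_word [:: (true, b); (false, c)] x0) = Defs.mul b (lambda x0 b c).
Proof.
move=> Bb Ac; have Vw := valid_word_pair Bb Ac; have [l_gt0 _ _] := orbit_lenP x0 Ac.
rewrite /eval (orbit_wordE x0 Vw) /= flatten_map1 -map_comp.
rewrite -[orbit_len x0 _](prednK l_gt0) /= /sec_letter /= B_sec0 //.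
by congr (Defs.mul b (prodl _)); apply: eq_map => i /=; rewrite act1_pow.
Qed.

Lemma lambda_trivial_of_period b c N : B b -> A c -> 0 < N -> pow (Defs.mul b c) N = tid ->
  exists n, iter n (lambda x0 b) c = tid.
Proof.
move=> Bb; elim/ltn_ind: N c => N IH c Ac N_gt0 bcN.
have [l_gt0 _ _] := orbit_lenP x0 Ac.
case: (leqP (orbit_len x0 c) 1) => [l1|l_gt1].
  by exists 1; rewrite /= /lambda (_ : orbit_len x0 c = 1) //; lia.
have Vw := valid_word_pair Bb Ac.
have lN : orbit_len x0 c %| N := orbit_len_dvd_period x0 Vw bcN.
have per : pow (Defs.mul b (lambda x0 b c)) (N %/ orbit_len x0 c) = tid.
  by rewrite -eval_orbit_word_pair //; exact (orbit_word_period x0 Vw bcN).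
have ltN : N %/ orbit_len x0 c < N by exact: ltn_Pdiv.
have q_gt0 : 0 < N %/ orbit_len x0 c by rewrite divn_gt0 // dvdn_leq.
have [n fn] := IH _ ltN _ (lambda_A Bb Ac) q_gt0 per.
by exists n.+1; rewrite iterSr.
Qed.

Lemma gen_valid_word g : gen (fun g => A g \/ B g) g -> exists2 w, valid_word w & g = eval w.
Proof.
elim=> [|h g' [Ah|Bh] _ [w Vw ->]|h h' g' [Ah|Bh] hh' h'h _ [w Vw ->]].
- by exists [::] => // ? [].
- by exists ((false, h) :: w) => //; apply/valid_word_cons.
- by exists ((true, h) :: w) => //; apply/valid_word_cons.
- exists ((false, h') :: w) => //; apply/valid_word_cons.
  by split=> //; exact: (subgroup_inv_mem A_group Ah hh' h'h).
- exists ((true, h') :: w) => //; apply/valid_word_cons.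
  by split=> //; exact: (subgroup_inv_mem B_group Bh hh' h'h).
Qed.

End ConstantSpinal.

Theorem mainTheorem10 (X : eqType) (x0 : X) (A B : tfun X -> Prop) :
  CS_group x0 A B -> abelian_set A -> periodic_set A ->
  (finite_exponent A \/ finite_support x0 B) ->
  (periodic_set (gen (fun g => A g \/ B g)) <->
   forall b, B b -> forall a, A a ->
     exists n, iter n (lambda x0 b) a = tid).
Proof.
move=> [[HA HAr _ HB HBs] [Hb0 HbA _]] HAab HAper finite.
have [e [T [e_gt0 eT]]] := exists_uniform_section_exponent HbA finite.
split=> [G_periodic b Bb a Aa | lambda_trivial g /(gen_valid_word HA HB) [w Vw ->]].
  have [N [N_gt0 baN]] := G_periodic _ (genM (or_intror Bb) (genM (or_introl Aa) (gen1 _))).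
  exact: (lambda_trivial_of_period HA HAr HB HBs Hb0 HbA HAper Bb Aa N_gt0 baN).
exact: (periodic_valid_word HA HAr HB HBs Hb0 HbA HAab HAper e_gt0 eT lambda_trivial Vw).
Qed.
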